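(* Let $M=\langle n_1,n_2,n_3\rangle$ be a numerical monoid of embedding dimension three with minimal generators $n_1<n_2<n_3$. Then: (1) for all $(a,b,c)\in\mathsf{Z}(\alpha(M)n_2-n_1)$ we have $b=0$; (2) if $L(\alpha(M)n_2)\neq L(\alpha(M)n_2-n_1)+1$, then $L(\alpha(M)n_2)=\alpha(M)$; (3) $L(\alpha(M)n_2)\neq L(\alpha(M)n_2-n_1)+1$ if and only if for all $(a,b,c)\in\mathsf{Z}(\alpha(M)n_2)$ with $b=0$ we have $a+c<\alpha(M)$; (4) if $\alpha(M)=2$ or $\alpha(M)=n_1$, then $L(\alpha(M)n_2)=L(\alpha(M)n_2-n_1)+1$; (5) $\alpha(M)\leq n_1$. Analogously: (1') for all $(a,b,c)\in\mathsf{Z}(\beta(M)n_2-n_3)$ we have $b=0$; (2') if $\ell(\beta(M)n_2)\neq \ell(\beta(M)n_2-n_3)+1$, then $\ell(\beta(M)n_2)=\beta(M)$; (3') $\ell(\beta(M)n_2)\neq \ell(\beta(M)n_2-n_3)+1$ if and only if for all $(a,b,c)\in\mathsf{Z}(\beta(M)n_2)$ with $b=0$ we have $a+c>\beta(M)$; (4') if $\beta(M)=n_3$, then $\ell(\beta(M)n_2)=\ell(\beta(M)n_2-n_3)+1$; (5') $\beta(M)\leq n_3$.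
   Context: $\mathbb{N}$ denotes the nonnegative integers. A numerical monoid is a submonoid of $\mathbb{N}$ with finite complement. For $x\in M$, $\mathsf{Z}(x)=\{(a_1,a_2,a_3)\in\mathbb{N}^3\mid a_1n_1+a_2n_2+a_3n_3=x\}$; the length of a factorization is $a_1+a_2+a_3$; $L(x)$ and $\ell(x)$ are the maximum and minimum factorization lengths of $x$. Define $\alpha(M)=\min\{b\in\mathbb{N}\mid bn_2-n_1\in M\}$ and $\beta(M)=\min\{b\in\mathbb{N}\mid bn_2-n_3\in M\}$. *)

From mathcomp Require Import all_boot.
Set Implicit Arguments. Unset Strict Implicit. Unset Printing Implicit Defensive.

Definition emb_dim3 (n1 n2 n3 : nat) : Prop :=
  [/\ 0 < n1, n1 < n2, n2 < n3 & gcdn (gcdn n1 n2) n3 = 1] /\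
  [/\ ~ (exists b c, n1 = b * n2 + c * n3),
      ~ (exists a c, n2 = a * n1 + c * n3) &
      ~ (exists a b, n3 = a * n1 + b * n2)].

(* Membership in M (boolean).  The search bound a,b,c <= x is exhaustive as
   soon as the generators are positive, which holds under emb_dim3. *)
Definition inM (n1 n2 n3 x : nat) : bool :=
  [exists a : 'I_x.+1, exists b : 'I_x.+1, exists c : 'I_x.+1,
     a * n1 + b * n2 + c * n3 == x].

Definition alpha_pred (n1 n2 n3 : nat) (b : nat) : bool :=
  (n1 <= b * n2) && inM n1 n2 n3 (b * n2 - n1).
Definition beta_pred (n1 n2 n3 : nat) (b : nat) : bool :=
  (n3 <= b * n2) && inM n1 n2 n3 (b * n2 - n3).

(* The disjuncts (b == n1), (b == n3) only guarantee existence for ex_minn;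
   under emb_dim3, alpha_pred n1 and beta_pred n3 hold, so these are exactly
   the minima alpha(M), beta(M) of the paper. *)
Lemma alpha_ex n1 n2 n3 : exists b, alpha_pred n1 n2 n3 b || (b == n1).
Proof. by exists n1; rewrite eqxx orbT. Qed.
Lemma beta_ex n1 n2 n3 : exists b, beta_pred n1 n2 n3 b || (b == n3).
Proof. by exists n3; rewrite eqxx orbT. Qed.

Definition alpha (n1 n2 n3 : nat) : nat := ex_minn (alpha_ex n1 n2 n3).
Definition beta (n1 n2 n3 : nat) : nat := ex_minn (beta_ex n1 n2 n3).

(* Set of factorizations Z(x), as a list of triples ((a,b),c); the bound
   a,b,c <= x is exhaustive for positive generators. *)
Definition factorizations (n1 n2 n3 x : nat) : seq (nat * nat * nat) :=
  [seq t <- [seq (p, c) | p <- [seq (a, b) | a <- iota 0 x.+1, b <- iota 0 x.+1],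
                    c <- iota 0 x.+1]
     | t.1.1 * n1 + t.1.2 * n2 + t.2 * n3 == x].

Definition flen (t : nat * nat * nat) : nat := t.1.1 + t.1.2 + t.2.

Definition Lmax (n1 n2 n3 x : nat) : nat :=
  \max_(t <- factorizations n1 n2 n3 x) flen t.

(* Minimum factorization length l(x); the neutral element 3x+1 exceeds every
   factorization length, so for x in M this is the true minimum. *)
Definition lmin (n1 n2 n3 x : nat) : nat :=
  \big[minn/(3 * x).+1]_(t <- factorizations n1 n2 n3 x) flen t.

From mathcomp Require Import all_boot zify.
Set Implicit Arguments. Unset Strict Implicit. Unset Printing Implicit Defensive.

(* Let x = k n2 and y = x - n1.  A factorization of x using n1 loses one
   copy of n1 to become a factorization of y, and one avoiding n1 has length
   at most k since n2 < n3; conversely every factorization of y extends by n1.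
   Hence L(x) = max(L(y) + 1, k) as soon as y lies in M.  For k = alpha the
   minimality of alpha forbids n2 in any factorization of y, and claims (1)-(4)
   are read off this formula.  Dually l(k n2) = min(l(k n2 - n3) + 1, k),
   using n1 < n2, gives (1')-(4').  Finally (5) and (5') hold because
   n1 n2 - n1 = (n2 - 1) n1 and n3 n2 - n3 = (n2 - 1) n3 lie in M. *)

Lemma big_seq_selective (R : Type) (I : eqType) (op : R -> R -> R) (idx : R)
    (s : seq I) (F : I -> R) :
  (forall u v, op u v = u \/ op u v = v) ->
  \big[op/idx]_(t <- s) F t = idx \/
  exists2 t, t \in s & \big[op/idx]_(t <- s) F t = F t.
Proof.
move=> op_sel; elim: s => [|t s IHs]; first by left; rewrite big_nil.
rewrite big_cons; case: (op_sel (F t) (\big[op/idx]_(j <- s) F j)) => ->.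
  by right; exists t; rewrite ?mem_head.
case: IHs => [->|[u us ->]]; first by left.
by right; exists u; rewrite // inE us orbT.
Qed.

Lemma geq_bigminn_seq (I : eqType) (s : seq I) (m : nat) (F : I -> nat) t :
  t \in s -> \big[minn/m]_(u <- s) F u <= F t.
Proof.
elim: s => [|u s IHs] //; rewrite inE big_cons => /predU1P[->|ts].
  exact: geq_minl.
exact: leq_trans (geq_minr _ _) (IHs ts).
Qed.

Lemma ex_minn_below (P : pred nat) (g : nat) (ex : exists b, P b || (b == g)) :
  P g -> [/\ P (ex_minn ex), ex_minn ex <= g & forall j, j < ex_minn ex -> ~~ P j].
Proof.
move=> Pg; case: ex_minnP => m /orP Pm m_min.
have m_le_g : m <= g by apply: m_min; rewrite eqxx orbT.
split=> // [|j j_lt_m]; first by case: Pm => // /eqP ->.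
by apply/negP => Pj; have := m_min j; rewrite Pj => /(_ isT); lia.
Qed.

Section Factorizations.

Variables n1 n2 n3 : nat.
Hypotheses (n1_gt0 : 0 < n1) (n2_gt0 : 0 < n2) (n3_gt0 : 0 < n3).

Local Notation M := (inM n1 n2 n3).
Local Notation L := (Lmax n1 n2 n3).
Local Notation l := (lmin n1 n2 n3).

Lemma mem_factorizations x a b c :
  (((a, b), c) \in factorizations n1 n2 n3 x) = (a * n1 + b * n2 + c * n3 == x).
Proof.
rewrite mem_filter [X in X && _]/=; case: eqP => // <-.
apply/allpairsP; exists ((a, b), c); split=> //; last by rewrite mem_iota /=; nia.
by apply/allpairsP; exists (a, b); rewrite !mem_iota; split=> //=; nia.
Qed.

Lemma factorization_eq x t :
  t \in factorizations n1 n2 n3 x -> t.1.1 * n1 + t.1.2 * n2 + t.2 * n3 = x.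
Proof. by rewrite mem_filter => /andP[/eqP]. Qed.

Lemma inMP x : reflect (exists a b c, a * n1 + b * n2 + c * n3 = x) (M x).
Proof.
apply: (iffP existsP) => [[a /existsP[b /existsP[c /eqP xE]]]|[a [b [c xE]]]].
  by exists a, b, c.
have [a_lt b_lt c_lt] : [/\ a < x.+1, b < x.+1 & c < x.+1] by split; nia.
exists (Ordinal a_lt); apply/existsP; exists (Ordinal b_lt).
by apply/existsP; exists (Ordinal c_lt); apply/eqP.
Qed.

Lemma leq_Lmax x a b c : a * n1 + b * n2 + c * n3 = x -> a + b + c <= L x.
Proof.
move=> xE; apply: (leq_bigmax_seq ((a, b), c) (P := xpredT) (F := flen)) => //.
by rewrite mem_factorizations xE.
Qed.

Lemma Lmax_attained x : M x ->
  exists a b c, a * n1 + b * n2 + c * n3 = x /\ a + b + c = L x.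
Proof.
move=> /inMP[a [b [c xE]]].
have maxn_sel u v : maxn u v = u \/ maxn u v = v.
  by case: (leqP u v) => ?; [right | left]; lia.
case: (big_seq_selective 0 (factorizations n1 n2 n3 x) flen maxn_sel).
  by move=> L0; exists a, b, c; have := leq_Lmax xE; rewrite /Lmax L0; lia.
case=> [[[a' b'] c'] t_in Lt]; exists a', b', c'.
by split; [exact: factorization_eq t_in | rewrite /Lmax Lt].
Qed.

Lemma Lmax_gt0 x : 0 < x -> M x -> 0 < L x.
Proof. by move=> x_gt0 /Lmax_attained[a [b [c [xE <-]]]]; nia. Qed.

Lemma lmin_leq x a b c : a * n1 + b * n2 + c * n3 = x -> l x <= a + b + c.
Proof.
move=> xE; apply: (@geq_bigminn_seq _ _ _ flen ((a, b), c)).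
by rewrite mem_factorizations xE.
Qed.

Lemma lmin_attained x : M x ->
  exists a b c, a * n1 + b * n2 + c * n3 = x /\ a + b + c = l x.
Proof.
move=> /inMP[a [b [c xE]]].
have minn_sel u v : minn u v = u \/ minn u v = v.
  by case: (leqP u v) => ?; [left | right]; lia.
case: (big_seq_selective (3 * x).+1 (factorizations n1 n2 n3 x) flen minn_sel).
  by move=> l_idx; have := lmin_leq xE; rewrite /lmin l_idx; nia.
case=> [[[a' b'] c'] t_in lt]; exists a', b', c'.
by split; [exact: factorization_eq t_in | rewrite /lmin lt].
Qed.

Lemma shift_factorization_no_n2 g k a b c :
  (forall j, j < k -> ~~ ((g <= j * n2) && M (j * n2 - g))) ->
  a * n1 + b * n2 + c * n3 = k * n2 - g -> b = 0.
Proof.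
case: b => // b k_min xE.
case: k k_min xE => [|k] k_min xE; first by move: xE; rewrite mul0n sub0n; nia.
have /negP[] := k_min k (ltnSn k); move: xE; rewrite !mulSn => xE.
by apply/andP; split; [lia | apply/inMP; exists a, b, c; lia].
Qed.

Lemma alphaP : let al := alpha n1 n2 n3 in
  [/\ n1 <= al * n2, M (al * n2 - n1), al <= n1
    & forall j, j < al -> ~~ alpha_pred n1 n2 n3 j].
Proof.
have n1_pred : alpha_pred n1 n2 n3 n1.
  by apply/andP; split; [nia | apply/inMP; exists n2.-1, 0, 0; nia].
by have [/andP[]] := ex_minn_below (alpha_ex n1 n2 n3) n1_pred.
Qed.

Lemma betaP : let be := beta n1 n2 n3 in
  [/\ n3 <= be * n2, M (be * n2 - n3), be <= n3
    & forall j, j < be -> ~~ beta_pred n1 n2 n3 j].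
Proof.
have n3_pred : beta_pred n1 n2 n3 n3.
  by apply/andP; split; [nia | apply/inMP; exists 0, 0, n2.-1; nia].
by have [/andP[]] := ex_minn_below (beta_ex n1 n2 n3) n3_pred.
Qed.

Hypotheses (n1_lt_n2 : n1 < n2) (n2_lt_n3 : n2 < n3).

Variable k : nat.

Local Notation x := (k * n2).

Lemma Lmax_shift : n1 <= x -> M (x - n1) -> L x = maxn (L (x - n1)).+1 k.
Proof.
move=> n1_le yM; apply/eqP; rewrite eqn_leq geq_max.
have xM : M x by apply/inMP; exists 0, k, 0; lia.
apply/and3P; split.
- have [[|a] [b [c [xE <-]]]] := Lmax_attained xM.
    by apply: leq_trans (leq_maxr _ _); nia.
  apply: leq_trans (leq_maxl _ _); rewrite mulSn in xE.
  by have := @leq_Lmax (x - n1) a b c; lia.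
- have [a [b [c [yE <-]]]] := Lmax_attained yM.
  by have := @leq_Lmax x a.+1 b c; rewrite mulSn; lia.
- by have := @leq_Lmax x 0 k 0; lia.
Qed.

Lemma lmin_shift : n3 <= x -> M (x - n3) -> l x = minn (l (x - n3)).+1 k.
Proof.
move=> n3_le yM; apply/eqP; rewrite eqn_leq leq_min -andbA.
have xM : M x by apply/inMP; exists 0, k, 0; lia.
apply/and3P; split.
- have [a [b [c [yE <-]]]] := lmin_attained yM.
  by have := @lmin_leq x a b c.+1; rewrite mulSn; lia.
- by have := @lmin_leq x 0 k 0; lia.
- have [a [b [[|c] [xE <-]]]] := lmin_attained xM.
    by apply: leq_trans (geq_minr _ _) _; nia.
  apply: leq_trans (geq_minl _ _) _; rewrite mulSn in xE.
  by have := @lmin_leq (x - n3) a b c; lia.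
Qed.

Section Alpha.

Hypotheses (n1_le_x : n1 <= x) (yM : M (x - n1)).
Hypothesis k_min : forall j, j < k -> ~~ alpha_pred n1 n2 n3 j.

Lemma alpha_factorization_no_n2 a b c :
  a * n1 + b * n2 + c * n3 = x - n1 -> b = 0.
Proof. exact: shift_factorization_no_n2. Qed.

Lemma Lmax_shift_neq_lt : L x <> (L (x - n1)).+1 <-> (L (x - n1)).+1 < k.
Proof. by rewrite Lmax_shift //; split; lia. Qed.

Lemma Lmax_shift_neq : L x <> (L (x - n1)).+1 -> L x = k.
Proof. by rewrite Lmax_shift //; lia. Qed.

Lemma Lmax_shift_neqP : L x <> (L (x - n1)).+1 <->
  (forall a b c, a * n1 + b * n2 + c * n3 = x -> b = 0 -> a + c < k).
Proof.
apply: iff_trans Lmax_shift_neq_lt _; split.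
  move=> Ly_lt a b c xE b0; subst b; case: a xE => [|a] xE; first by nia.
  by rewrite mulSn in xE; have := @leq_Lmax (x - n1) a 0 c; lia.
move=> xE_lt; have [a [b [c [yE <-]]]] := Lmax_attained yM.
have b0 := alpha_factorization_no_n2 yE; subst b.
by have := xE_lt a.+1 0 c; rewrite mulSn; lia.
Qed.

Lemma Lmax_shift_eq : k = 2 \/ k = n1 -> L x = (L (x - n1)).+1.
Proof.
case=> k_eq.
  have Ly_gt0 : 0 < L (x - n1) by apply: Lmax_gt0 => //; rewrite k_eq; lia.
  by move: Ly_gt0; rewrite Lmax_shift // k_eq; lia.
case: (eqVneq (L x) (L (x - n1)).+1) => // /eqP/Lmax_shift_neqP x_lt.
have : n2 * n1 + 0 * n2 + 0 * n3 = x by rewrite k_eq; lia.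
by move/x_lt/(_ erefl); lia.
Qed.

End Alpha.

Section Beta.

Hypotheses (n3_le_x : n3 <= x) (yM : M (x - n3)).
Hypothesis k_min : forall j, j < k -> ~~ beta_pred n1 n2 n3 j.

Lemma beta_factorization_no_n2 a b c :
  a * n1 + b * n2 + c * n3 = x - n3 -> b = 0.
Proof. exact: shift_factorization_no_n2. Qed.

Lemma lmin_shift_neq_le : l x <> (l (x - n3)).+1 <-> k <= l (x - n3).
Proof. by rewrite lmin_shift //; split; lia. Qed.

Lemma lmin_shift_neq : l x <> (l (x - n3)).+1 -> l x = k.
Proof. by rewrite lmin_shift //; lia. Qed.

Lemma lmin_shift_neqP : l x <> (l (x - n3)).+1 <->
  (forall a b c, a * n1 + b * n2 + c * n3 = x -> b = 0 -> k < a + c).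
Proof.
have k_gt0 : 0 < k by nia.
apply: iff_trans lmin_shift_neq_le _; split.
  move=> k_le a b c xE b0; subst b; case: c xE => [|c] xE; first by nia.
  by rewrite mulSn in xE; have := @lmin_leq (x - n3) a 0 c; lia.
move=> xE_gt; have [a [b [c [yE <-]]]] := lmin_attained yM.
have b0 := beta_factorization_no_n2 yE; subst b.
by have := xE_gt a 0 c.+1; rewrite mulSn; lia.
Qed.

Lemma lmin_shift_eq : k = n3 -> l x = (l (x - n3)).+1.
Proof.
move=> k_eq; case: (eqVneq (l x) (l (x - n3)).+1) => // /eqP/lmin_shift_neqP x_gt.
have : 0 * n1 + 0 * n2 + n2 * n3 = x by rewrite k_eq; lia.
by move/x_gt/(_ erefl); lia.
Qed.

End Beta.

End Factorizations.

Theorem mainTheorem6 (n1 n2 n3 : nat) :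
  emb_dim3 n1 n2 n3 ->
  let al := alpha n1 n2 n3 in
  let be := beta n1 n2 n3 in
  [/\ (* (1) *)
      (forall a b c, a * n1 + b * n2 + c * n3 = al * n2 - n1 -> b = 0),
      (* (2) *)
      (Lmax n1 n2 n3 (al * n2) <> (Lmax n1 n2 n3 (al * n2 - n1)).+1 ->
         Lmax n1 n2 n3 (al * n2) = al),
      (* (3) *)
      (Lmax n1 n2 n3 (al * n2) <> (Lmax n1 n2 n3 (al * n2 - n1)).+1 <->
         (forall a b c, a * n1 + b * n2 + c * n3 = al * n2 -> b = 0 ->
            a + c < al)),
      (* (4) *)
      (al = 2 \/ al = n1 ->
         Lmax n1 n2 n3 (al * n2) = (Lmax n1 n2 n3 (al * n2 - n1)).+1) &
      (* (5) *)
      al <= n1]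
  /\
  [/\ (* (1') *)
      (forall a b c, a * n1 + b * n2 + c * n3 = be * n2 - n3 -> b = 0),
      (* (2') *)
      (lmin n1 n2 n3 (be * n2) <> (lmin n1 n2 n3 (be * n2 - n3)).+1 ->
         lmin n1 n2 n3 (be * n2) = be),
      (* (3') *)
      (lmin n1 n2 n3 (be * n2) <> (lmin n1 n2 n3 (be * n2 - n3)).+1 <->
         (forall a b c, a * n1 + b * n2 + c * n3 = be * n2 -> b = 0 ->
            be < a + c)),
      (* (4') *)
      (be = n3 ->
         lmin n1 n2 n3 (be * n2) = (lmin n1 n2 n3 (be * n2 - n3)).+1) &
      (* (5') *)
      be <= n3].
Proof.
move=> [[n1_gt0 n1_lt_n2 n2_lt_n3 _] _] al be.
have n2_gt0 : 0 < n2 by lia.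
have n3_gt0 : 0 < n3 by lia.
have [n1_le al_M al_le al_min] := alphaP n1_gt0 n2_gt0 n3_gt0.
have [n3_le be_M be_le be_min] := betaP n1_gt0 n2_gt0 n3_gt0.
split; split=> //.
- exact: alpha_factorization_no_n2 al_min.
- exact: Lmax_shift_neq.
- exact: Lmax_shift_neqP.
- exact: Lmax_shift_eq.
- exact: beta_factorization_no_n2 be_min.
- exact: lmin_shift_neq.
- exact: lmin_shift_neqP.
- exact: lmin_shift_eq.
Qed.
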